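(* Let $I\subset S$ be a nonzero proper graded ideal. Then there exists a constant $c$ such that $\mathrm{v}(I^k)\ge\alpha(I)k+c$ for all $k\gg0$.
   Context: $S=K[x_1,\dots,x_n]$ is a standard graded polynomial ring over a field $K$, $S_d$ its degree-$d$ component. For a graded ideal $J\subset S$, $\mathrm{v}(J)=\min\{d:\exists f\in S_d\text{ with }(J:f)\in\operatorname{Ass}(J)\}$. $\alpha(I)$ is the least degree of a nonzero homogeneous element of $I$. *)

From Stdlib Require Import ClassicalEpsilon.
From mathcomp Require Import all_boot all_algebra.
From mathcomp Require Import mpoly.
Set Implicit Arguments. Unset Strict Implicit. Unset Printing Implicit Defensive.
Import GRing.Theory.
Local Open Scope ring_scope.

Section IdealDefs.
Variables (K : fieldType) (n : nat).
Local Notation S := {mpoly K[n]}.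

Definition is_ideal (I : S -> Prop) : Prop :=
  [/\ I 0,
      (forall f g, I f -> I g -> I (f + g)) &
      (forall r g, I g -> I (r * g))].

Definition hcomp (d : nat) (p : S) : S :=
  \sum_(m <- msupp p | mdeg m == d) p@_m *: 'X_[m].

Definition is_graded_ideal (I : S -> Prop) : Prop :=
  is_ideal I /\ forall f d, I f -> I (hcomp d f).

Definition kprod (I : S -> Prop) (k : nat) (g : S) : Prop :=
  exists t : seq S, [/\ size t = k, (forall h, h \in t -> I h) & g = \prod_(h <- t) h].

Definition ideal_pow (I : S -> Prop) (k : nat) : S -> Prop :=
  fun f => exists s : seq (S * S),
    (forall p, p \in s -> kprod I k p.2) /\ f = \sum_(p <- s) p.1 * p.2.

Definition colon (J : S -> Prop) (f : S) : S -> Prop := fun g => J (g * f).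

Definition is_prime_ideal (P : S -> Prop) : Prop :=
  [/\ is_ideal P, ~ P 1 & forall a b, P (a * b) -> P a \/ P b].

Definition Ass (J : S -> Prop) (P : S -> Prop) : Prop :=
  is_prime_ideal P /\ exists h : S, forall g, P g <-> colon J h g.

(* The least natural number satisfying P (0 if none exists). *)
Definition least (P : nat -> Prop) : nat :=
  match excluded_middle_informative
          (exists d, P d /\ forall e, P e -> (d <= e)%N) with
  | left h => proj1_sig (constructive_indefinite_description _ h)
  | right _ => 0%N
  end.

Definition vnumber (J : S -> Prop) : nat :=
  least (fun d => exists f : S, f \is d.-homog /\ Ass J (colon J f)).

Definition alpha (I : S -> Prop) : nat :=
  least (fun d => exists f : S, [/\ I f, f != 0 & f \is d.-homog]).

End IdealDefs.

From Stdlib Require Import ClassicalEpsilon Classical.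
From mathcomp Require Import all_boot all_order all_algebra mpoly zify.
Set Implicit Arguments. Unset Strict Implicit. Unset Printing Implicit Defensive.
Import Order.TTheory GRing.Theory Num.Theory.
Local Open Scope ring_scope.

(* Let alpha = alpha(I), fix a nonzero form g in I of degree alpha, and
   let k >= 1 and J = I^k.
   (1) J is a proper graded ideal, so some homogeneous f of degree v(J)
       makes (J : f) a prime ideal (in particular v(J) is attained).
   (2) g^k lies in J, hence in the prime (J : f), so g lies in (J : f):
       g f is a nonzero form of degree alpha + v(J) lying in J.
   (3) All monomials of elements of I have degree >= alpha, so all
       monomials of elements of J have degree >= k alpha.
   Hence alpha + v(J) >= k alpha.
   Only (1) requires work. *)

Section HomogeneousComponents.
Variables (K : fieldType) (n : nat).
Local Notation S := {mpoly K[n]}.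
Implicit Types (p g f a b : S).

Lemma hcompE d p m : (hcomp d p)@_m = if mdeg m == d then p@_m else 0.
Proof.
rewrite /hcomp raddf_sum /=.
under eq_bigr do rewrite mcoeffZ mcoeffX.
case: (boolP (m \in msupp p)) => mp.
  rewrite big_mkcond /= (bigD1_seq m) ?msupp_uniq //= eqxx mulr1 big1 ?addr0.
    by case: (mdeg m == d).
  by move=> m0 /negbTE; rewrite eq_sym => ->; case: ifP; rewrite ?mulr0.
rewrite big1_seq; last first.
  by move=> m' /andP[_ m'p]; case: (eqVneq m' m) => [e|_]; [rewrite -e m'p in mp | rewrite mulr0].
by move: mp; rewrite mcoeff_msupp negbK => /eqP ->; case: ifP.
Qed.

Lemma hcomp_sum d (T : Type) (s : seq T) (F : T -> S) :
  hcomp d (\sum_(x <- s) F x) = \sum_(x <- s) hcomp d (F x).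
Proof.
elim: s => [|x s IH]; rewrite ?big_nil ?big_cons.
  by apply/mpolyP => m; rewrite hcompE mcoeff0; case: ifP.
by rewrite -IH; apply/mpolyP => m; rewrite mcoeffD !hcompE mcoeffD; case: ifP; rewrite ?addr0.
Qed.

Lemma hcomp_homog d p : hcomp d p \is d.-homog.
Proof.
apply/dhomogP => m; rewrite mcoeff_msupp hcompE.
by case: (mdeg m =P d) => // _; rewrite eqxx.
Qed.

Lemma hcomp_of_homog d e p : p \is e.-homog -> hcomp d p = if d == e then p else 0.
Proof.
move=> hp; apply/mpolyP => m; rewrite hcompE.
case: (eqVneq d e) => [->|ne].
  by case: eqP => // ne'; rewrite (dhomog_nemf_coeff hp) //; apply/eqP.
case: eqP => [E|]; last by rewrite mcoeff0.
by move: ne; rewrite -E => ne; rewrite mcoeff0 (dhomog_nemf_coeff hp).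
Qed.

Lemma hcomp_ge d p : (msize p <= d)%N -> hcomp d p = 0.
Proof.
move=> h; apply/mpolyP => m; rewrite hcompE mcoeff0; case: eqP => // E.
by apply/memN_msupp_eq0/msize_mdeg_ge; rewrite E.
Qed.

Lemma hcomp_supp_neq0 p m : m \in msupp p -> hcomp (mdeg m) p != 0.
Proof.
move=> mp; apply/eqP => /(congr1 (mcoeff m)); rewrite hcompE eqxx mcoeff0 => /eqP.
by apply/negP; rewrite -mcoeff_msupp.
Qed.

Lemma hcomp_decomp p : p = \sum_(i < msize p) hcomp i p.
Proof.
apply/mpolyP => m; rewrite raddf_sum /=.
under eq_bigr do rewrite hcompE.
case: (ltnP (mdeg m) (msize p)) => h.
  rewrite (bigD1 (Ordinal h)) //= eqxx big1 ?addr0 //.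
  by move=> i /eqP ne; case: eqP => // E; case: ne; apply/val_inj; rewrite /= E.
rewrite big1; last by move=> i _; case: eqP => // E; move: (ltn_ord i); rewrite -E ltnNge h.
by apply/memN_msupp_eq0/msize_mdeg_ge.
Qed.

Lemma hcompMh d e g f : f \is e.-homog ->
  hcomp d (g * f) = if (e <= d)%N then hcomp (d - e) g * f else 0.
Proof.
move=> hf; rewrite {1}(hcomp_decomp g) mulr_suml hcomp_sum.
under eq_bigr => i _ do rewrite (hcomp_of_homog _ (dhomogM (hcomp_homog i g) hf)).
case: leqP => hed; last first.
  by rewrite big1 // => i _; case: eqP => // E; move: hed; rewrite E ltnNge leq_addl.
case: (ltnP (d - e) (msize g)) => hs; last first.
  rewrite hcomp_ge // mul0r big1 // => i _; case: eqP => // E.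
  by move: hs (ltn_ord i); rewrite E addnK => hs; rewrite ltnNge hs.
rewrite (bigD1 (Ordinal hs)) //= subnK // eqxx big1 ?addr0 //.
move=> i /eqP ne; case: eqP => // E; case: ne; apply/val_inj.
by rewrite /= E addnK.
Qed.

Lemma msize_sub_top p : (msize (p - hcomp (msize p).-1 p) <= (msize p).-1)%N.
Proof.
rewrite msizeE; apply/bigmax_leqP_seq => m; rewrite mcoeff_msupp mcoeffB hcompE.
case: (mdeg m =P (msize p).-1) => [E|ne]; first by rewrite subrr eqxx.
rewrite subr0 -mcoeff_msupp => /msize_mdeg_lt lt _; move: ne lt.
by case: (msize p) => [|s] //=; lia.
Qed.

Lemma hcomp_topM a b : hcomp ((msize a).-1 + (msize b).-1) (a * b) =
   hcomp (msize a).-1 a * hcomp (msize b).-1 b.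
Proof.
set da := (msize a).-1; set db := (msize b).-1.
rewrite {1}(hcomp_decomp b) mulr_sumr hcomp_sum.
under eq_bigr => j _ do rewrite (hcompMh _ _ (hcomp_homog j b)).
case: (posnP (msize b)) => [b0|bpos].
  by rewrite b0 big_ord0 /db b0 (hcomp_ge (p := b)) ?b0 // mulr0.
have hdb : (db < msize b)%N by rewrite /db prednK.
rewrite (bigD1 (Ordinal hdb)) //= leq_addl addnK big1 ?addr0 //.
move=> j /eqP ne; case: ifP => // hj; rewrite hcomp_ge ?mul0r //.
have ltj : (j < db)%N.
  rewrite ltn_neqAle -ltnS prednK // ltn_ord andbT.
  by apply/eqP => E; apply: ne; apply: val_inj.
by rewrite /da; move: ltj; case: (mmeasure mdeg a) => [|s] /=; lia.
Qed.

End HomogeneousComponents.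

Lemma least_ex (P : nat -> Prop) d : P d -> exists d0, P d0 /\ forall e, P e -> (d0 <= e)%N.
Proof.
elim/ltn_ind: d => d IH Pd.
case: (classic (exists e, (e < d)%N /\ P e)) => [[e [lt Pe]]|nex]; first exact: IH Pe.
exists d; split => // e Pe; rewrite leqNgt; apply/negP => lt; apply: nex; by exists e.
Qed.

Lemma leastP (P : nat -> Prop) d : P d -> P (least P) /\ forall e, P e -> (least P <= e)%N.
Proof.
move=> /least_ex ex; rewrite /least.
case: excluded_middle_informative => [h|]; last by [].
by case: (constructive_indefinite_description _ h).
Qed.

Section IdealClosure.
Variables (K : fieldType) (n : nat) (J : {mpoly K[n]} -> Prop).
Hypothesis J_ideal : is_ideal J.
Implicit Types (r f g : {mpoly K[n]}).

Lemma ideal0 : J 0.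
Proof. by case: J_ideal. Qed.

Lemma idealD f g : J f -> J g -> J (f + g).
Proof. by case: J_ideal => _ hD _; apply: hD. Qed.

Lemma idealM r g : J g -> J (r * g).
Proof. by case: J_ideal => _ _ hM; apply: hM. Qed.

Lemma idealMr r g : J g -> J (g * r).
Proof. by rewrite mulrC; apply: idealM. Qed.

Lemma idealZ c g : J g -> J (c *: g).
Proof. by rewrite -mul_mpolyC; apply: idealM. Qed.

Lemma idealB f g : J f -> J g -> J (f - g).
Proof. by move=> Jf Jg; apply: idealD => //; rewrite -scaleN1r; apply: idealZ. Qed.

Lemma ideal_sum (T : eqType) (s : seq T) (F : T -> {mpoly K[n]}) :
  (forall x, x \in s -> J (F x)) -> J (\sum_(x <- s) F x).
Proof.
elim: s => [|x s IH] H; rewrite ?big_nil ?big_cons; first exact: ideal0.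
by apply: idealD; [apply: H; rewrite mem_head | apply: IH => y ys; apply: H; rewrite inE ys orbT].
Qed.

Lemma colon_ideal f : is_ideal (colon J f).
Proof.
split; rewrite /colon.
- by rewrite mul0r; apply: ideal0.
- by move=> x y hx hy; rewrite mulrDl; apply: idealD.
- by move=> r x hx; rewrite -mulrA; apply: idealM.
Qed.

End IdealClosure.

Lemma prime_exp (K : fieldType) (n : nat) (P : {mpoly K[n]} -> Prop) g k :
  is_prime_ideal P -> P (g ^+ k.+1) -> P g.
Proof.
case=> _ _ primeP; elim: k => [|k IH]; first by rewrite expr1.
by rewrite exprS => /primeP [].
Qed.

Section DegreeBounds.
Variables (K : fieldType) (n : nat).
Local Notation S := {mpoly K[n]}.
Implicit Types (p q h : S).

Definition lowdeg (k : nat) (h : S) : Prop := forall m, m \in msupp h -> (k <= mdeg m)%N.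

Lemma lowdeg_sum k (T : eqType) (s : seq T) (F : T -> S) :
  (forall x, x \in s -> lowdeg k (F x)) -> lowdeg k (\sum_(x <- s) F x).
Proof.
elim: s => [|x s IH] H m; rewrite ?big_nil ?big_cons ?msupp0 //.
move/msuppD_le; rewrite mem_cat => /orP[]; first by apply: H; rewrite mem_head.
by apply: IH => y ys; apply: H; rewrite inE ys orbT.
Qed.

Lemma lowdegM a b p q : lowdeg a p -> lowdeg b q -> lowdeg (a + b) (p * q).
Proof.
move=> hp hq m /msuppM_le /allpairsP [[m1 m2] [/= /hp h1 /hq h2 ->]].
by rewrite mdegD leq_add.
Qed.

Lemma kprod_lowdeg (I : S -> Prop) a k g :
  (forall h, I h -> lowdeg a h) -> kprod I k g -> lowdeg (k * a) g.
Proof.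
move=> lowI [t [<- Ht ->]]; elim: t Ht => [|x t IH] Ht.
  by rewrite big_nil => m; rewrite msupp1 inE => /eqP ->; rewrite mdeg0.
rewrite big_cons /= mulSn; apply: lowdegM.
  by apply: lowI; apply: Ht; rewrite mem_head.
by apply: IH => h ht; apply: Ht; rewrite inE ht orbT.
Qed.

Lemma ideal_pow_lowdeg (I : S -> Prop) a k g :
  (forall h, I h -> lowdeg a h) -> ideal_pow I k g -> lowdeg (k * a) g.
Proof.
move=> lowI [s [Hs ->]]; apply: lowdeg_sum => x xs.
by rewrite -[(k * a)%N]add0n; apply: lowdegM => [//|]; apply: kprod_lowdeg (Hs _ xs).
Qed.

End DegreeBounds.

Section IdealPower.
Variables (K : fieldType) (n : nat) (I : {mpoly K[n]} -> Prop).
Local Notation S := {mpoly K[n]}.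
Implicit Types (g h : S).

Lemma ideal_pow_ideal k : is_ideal (ideal_pow I k).
Proof.
split.
- by exists [::]; rewrite big_nil.
- move=> f g [s1 [H1 ->]] [s2 [H2 ->]]; exists (s1 ++ s2); rewrite big_cat; split => //.
  by move=> p; rewrite mem_cat => /orP[/H1|/H2].
- move=> r g [s [Hs ->]]; exists [seq (r * z.1, z.2) | z : S * S <- s]; split.
    by move=> z /mapP [x xs ->] /=; apply: Hs.
  by rewrite big_map mulr_sumr; apply: eq_bigr => z _; rewrite mulrA.
Qed.

Lemma kprod_ideal_pow k g : kprod I k g -> ideal_pow I k g.
Proof.
move=> H; exists [:: (1, g)]; rewrite big_seq1 mul1r; split => // p.
by rewrite inE => /eqP ->.
Qed.

Lemma kprod_cons k h g : I h -> kprod I k g -> kprod I k.+1 (h * g).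
Proof.
move=> Ih [t [St Ht ->]]; exists (h :: t); rewrite big_cons /= St; split => //.
by move=> x; rewrite inE => /orP[/eqP ->|/Ht].
Qed.

Lemma ideal_pow_exp k g : I g -> ideal_pow I k (g ^+ k).
Proof.
move=> Ig; apply: kprod_ideal_pow; elim: k => [|k IH].
  by rewrite expr0; exists [::]; rewrite big_nil.
by rewrite exprS; apply: kprod_cons.
Qed.

Lemma ideal_pow_sub k g : is_ideal I -> (0 < k)%N -> ideal_pow I k g -> I g.
Proof.
move=> iI k0 [s [Hs ->]]; apply: ideal_sum => // x /Hs [t [St Ht ->]].
apply: idealM => //; move: k0; rewrite -St; case: t Ht St => [|y t] // Ht _ _.
by rewrite big_cons; apply: idealMr => //; apply: Ht; rewrite mem_head.
Qed.

Hypothesis I_graded : is_graded_ideal I.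

(* Homogeneous components of products of k elements of I lie in I^k:
   expand the first factor into its components, which lie in I. *)
Lemma kprod_hcomp k g j : kprod I k g -> ideal_pow I k (hcomp j g).
Proof.
have iP := ideal_pow_ideal.
case=> t [<- Ht ->]; elim: t Ht j => [|x t IH] Ht j.
  rewrite big_nil (hcomp_of_homog _ (dhomog1 _ _)).
  case: eqP => _; last exact: ideal0.
  by apply: kprod_ideal_pow; exists [::]; rewrite big_nil.
rewrite big_cons /= {1}(hcomp_decomp x) mulr_suml hcomp_sum.
apply: (ideal_sum (iP _)) => i _.
rewrite mulrC (hcompMh _ _ (hcomp_homog i x)); case: ifP => _; last exact: ideal0.
have /IH : forall h, h \in t -> I h by move=> h ht; apply: Ht; rewrite inE ht orbT.
move=> /(_ (j - i)%N) [s [Hs ->]]; rewrite mulr_suml; apply: (ideal_sum (iP _)) => y ys.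
rewrite -mulrA [y.2 * _]mulrC; apply: idealM => //.
apply: kprod_ideal_pow; apply: kprod_cons; last exact: Hs.
by apply: I_graded.2; apply: Ht; rewrite mem_head.
Qed.

Lemma ideal_pow_graded k : is_graded_ideal (ideal_pow I k).
Proof.
have iP := ideal_pow_ideal k; split => // f d [s [Hs ->]].
rewrite hcomp_sum; apply: ideal_sum => // y ys.
rewrite {1}(hcomp_decomp y.1) mulr_suml hcomp_sum; apply: ideal_sum => // i _.
rewrite mulrC (hcompMh _ _ (hcomp_homog i y.1)); case: ifP => _; last exact: ideal0.
by apply: idealMr => //; apply: kprod_hcomp; apply: Hs.
Qed.

End IdealPower.

Section GradedPrime.
Variables (K : fieldType) (n : nat).
Local Notation S := {mpoly K[n]}.
Implicit Types (a b f g : S) (P : S -> Prop).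

(* A graded ideal is prime as soon as the prime condition holds for forms:
   if a b lies in P but neither a nor b does, then by induction on the
   sizes one may assume the top components of a and b are outside P, and
   their product is the top component of a b, which lies in P. *)
Lemma graded_prime_of_forms P : is_graded_ideal P ->
  (forall a b da db, a \is da.-homog -> b \is db.-homog -> P (a * b) -> P a \/ P b) ->
  forall a b, P (a * b) -> P a \/ P b.
Proof.
move=> [iP gP] Hh.
suff H : forall N a b, (msize a + msize b <= N)%N -> P (a * b) -> P a \/ P b.
  by move=> a b; apply: H (leqnn _).
elim=> [|N IH] a b hN Pab.
  left; have : msize a == 0%N by move: hN; case: (msize a).
  by rewrite msize_poly_eq0 => /eqP ->; apply: ideal0.
case: (classic (P a)) => Pa; first by left.
case: (classic (P b)) => Pb; first by right.
have sa : (0 < msize a)%N.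
  by rewrite lt0n msize_poly_eq0; apply/eqP => a0; apply: Pa; rewrite a0; apply: ideal0.
have sb : (0 < msize b)%N.
  by rewrite lt0n msize_poly_eq0; apply/eqP => b0; apply: Pb; rewrite b0; apply: ideal0.
set ta := hcomp (msize a).-1 a; set tb := hcomp (msize b).-1 b.
case: (classic (P ta)) => Pta.
  have P1 : P ((a - ta) * b) by rewrite mulrBl; apply: idealB => //; apply: idealMr.
  have hs : (msize (a - ta) + msize b <= N)%N by have := msize_sub_top a; rewrite -/ta; lia.
  case: (IH _ _ hs P1) => [H|//]; exfalso; apply: Pa.
  by rewrite -(subrK ta a); apply: idealD.
case: (classic (P tb)) => Ptb.
  have P1 : P (a * (b - tb)) by rewrite mulrBr; apply: idealB => //; apply: idealM.
  have hs : (msize a + msize (b - tb) <= N)%N by have := msize_sub_top b; rewrite -/tb; lia.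
  case: (IH _ _ hs P1) => [//|H]; exfalso; apply: Pb.
  by rewrite -(subrK tb b); apply: idealD.
have := gP _ ((msize a).-1 + (msize b).-1)%N Pab; rewrite hcomp_topM -/ta -/tb.
by case/(Hh _ _ _ _ (hcomp_homog _ _) (hcomp_homog _ _)).
Qed.

Lemma colon_graded J f e : is_graded_ideal J -> f \is e.-homog -> is_graded_ideal (colon J f).
Proof.
move=> [iJ gJ] hf; split; first exact: colon_ideal.
move=> g d; rewrite /colon => /(gJ _ (d + e)%N).
by rewrite (hcompMh _ _ hf) leq_addl addnK.
Qed.

End GradedPrime.

(* Every sequence of natural numbers has a nondecreasing subsequence:
   take phi (k+1) to be a minimiser of f beyond phi k. *)
Lemma nat_mono_sub (f : nat -> nat) : exists phi : nat -> nat,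
  (forall i, (phi i < phi i.+1)%N) /\ (forall i, (f (phi i) <= f (phi i.+1))%N).
Proof.
have tail_min i : exists j, (i <= j)%N /\ forall j', (i <= j')%N -> (f j <= f j')%N.
  have [v [[j [ij <-]] Hv]] := @least_ex (fun v => exists j, (i <= j)%N /\ f j = v) (f i)
     (ex_intro _ i (conj (leqnn i) erefl)).
  by exists j; split => // j' ij'; apply: Hv; exists j'.
have [c cP] := ClassicalEpsilon.choice _ tail_min.
have c_min j j' : (c j <= j')%N -> (f (c j) <= f j')%N.
  by case: (cP j) => ij H cj; apply: H; apply: leq_trans cj.
pose phi k := iter k (fun j => c j.+1) (c 0%N).
have phi_c k : exists j, phi k = c j by case: k => [|k]; [exists 0%N | exists (phi k).+1].
have phi_lt i : (phi i < phi i.+1)%N by case: (cP (phi i).+1).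
exists phi; split => // i; have [j Ej] := phi_c i.
by rewrite Ej; apply: c_min; rewrite -Ej ltnW.
Qed.

Section Dickson.
Variable n : nat.

Lemma mono_sub_coords (s : nat -> 'X_{1..n}) k : (k <= n)%N -> exists phi : nat -> nat,
  (forall i, (phi i < phi i.+1)%N) /\
  forall c : 'I_n, (c < k)%N -> forall i, (s (phi i) c <= s (phi i.+1) c)%N.
Proof.
elim: k => [|k IH] hk; first by exists id; split => // c.
have [phi [phI phM]] := IH (ltnW hk).
have [psi [psI psM]] := nat_mono_sub (fun i => s (phi i) (Ordinal hk)).
exists (fun i => phi (psi i)); split.
  by move=> i; apply: (homo_ltn (r := fun a b => (a < b)%N)) => //; apply: ltn_trans.
move=> c; rewrite ltnS leq_eqVlt => /orP[/eqP E|lt] i.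
  by have -> : c = Ordinal hk by apply: val_inj.
apply: (homo_leq (f := fun j => s (phi j) c) (r := fun a b => (a <= b)%N)) => //.
- by move=> y x z; apply: leq_trans.
- by move=> j; apply: phM.
- exact: ltnW.
Qed.

Lemma dickson (s : nat -> 'X_{1..n}) : exists i j, (i < j)%N /\ (s i <= s j)%MM.
Proof.
have [phi [phI phM]] := mono_sub_coords s (leqnn n).
by exists (phi 0%N), (phi 1%N); split => //; apply/mnm_lepP => c; apply: phM.
Qed.

End Dickson.

Section Noetherian.
Variables (K : fieldType) (n : nat).
Local Notation S := {mpoly K[n]}.
Implicit Types (g h : S) (J : S -> Prop).

Definition leadmon J (m : 'X_{1..n}) : Prop := exists h, [/\ J h, h != 0 & mlead h = m].

Lemma leadmon_up J m m' : is_ideal J -> leadmon J m -> (m <= m')%MM -> leadmon J m'.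
Proof.
move=> iJ [h [Jh h0 <-]] le; have X0 : 'X_[m' - mlead h] != 0 :> S.
  by apply/eqP => /(congr1 (mcoeff (m' - mlead h))); rewrite mcoeffX eqxx mcoeff0 => /eqP; rewrite oner_eq0.
exists ('X_[m' - mlead h] * h); split.
- exact: idealM.
- by rewrite mulf_neq0.
- by rewrite mleadM // mleadXm submK.
Qed.

(* Nested ideals J1 <= J2 with the same leading monomials are equal:
   reduce the leading term of an element of J2 by one of J1 and recurse
   along the well-founded monomial order. *)
Lemma ideal_eq_leadmon J1 J2 : is_ideal J1 -> is_ideal J2 -> (forall g, J1 g -> J2 g) ->
  (forall m, leadmon J2 m -> leadmon J1 m) -> forall g, J2 g -> J1 g.
Proof.
move=> i1 i2 s12 hlm.
suff H : forall m g, J2 g -> g != 0 -> mlead g = m -> J1 g.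
  move=> g J2g; case: (eqVneq g 0) => [->|g0]; first exact: ideal0.
  exact: H J2g g0 erefl.
elim/(@ltmwf n) => m IH g J2g g0 gm.
have [h [J1h h0 hm]] := hlm m (ex_intro _ g (And3 J2g g0 gm)).
have hc : h@_m != 0 by rewrite -hm mleadc_eq0.
set c := g@_m / h@_m; set g' := g - c *: h.
have J2g' : J2 g' by apply: idealB => //; apply: idealZ => //; apply: s12.
have -> : g = g' + c *: h by rewrite /g' subrK.
apply: idealD => //; last exact: idealZ.
case: (eqVneq g' 0) => [->|g'0]; first exact: ideal0.
apply: (IH (mlead g')) => //.
have c0 : g'@_m = 0 by rewrite /g' mcoeffB mcoeffZ /c divfK // subrr.
rewrite lt_neqAle; apply/andP; split.
  by apply/eqP => E; move: (mlead_supp g'0); rewrite E mcoeff_msupp c0 eqxx.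
apply: le_trans (mleadB_le _ _) _; rewrite leUx -gm lexx /=.
by apply: le_trans (mleadZ_le _ _) _; rewrite hm gm.
Qed.

(* Otherwise each step adds a new leading monomial,
   and Dickson's lemma makes a later one a multiple of an earlier one. *)
Lemma ideal_acc (C : nat -> S -> Prop) : (forall i, is_ideal (C i)) ->
  (forall i g, C i g -> C i.+1 g) -> exists i, forall g, C i.+1 g -> C i g.
Proof.
move=> iC sC; apply: NNPP => nex.
have new i : exists m, leadmon (C i.+1) m /\ ~ leadmon (C i) m.
  apply: NNPP => nm; apply: nex; exists i.
  apply: ideal_eq_leadmon => // [g|m Hm]; first exact: sC.
  by apply: NNPP => nm'; apply: nm; exists m.
have [s sP] := ClassicalEpsilon.choice _ new.
have mono i j : (i <= j)%N -> forall g, C i g -> C j g.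
  apply: (homo_leq (f := C) (r := fun X Y => forall g, X g -> Y g)) => //.
  by move=> Y X Z hXY hYZ g /hXY /hYZ.
have [i [j [ij le]]] := dickson s.
case: (sP j) => _; apply; apply: leadmon_up le => //.
case: (sP i) => [[h [Ch h0 hm]] _]; exists h; split => //.
exact: mono ij _ Ch.
Qed.

End Noetherian.

Lemma chain_of_steps (T : Type) (P : T -> Prop) (R : T -> T -> Prop) (x0 : T) :
  P x0 -> (forall x, P x -> exists2 y, P y & R x y) ->
  exists F : nat -> T, forall i, P (F i) /\ R (F i) (F i.+1).
Proof.
move=> Px0 step.
have step' x : exists y, P x -> P y /\ R x y.
  by case: (classic (P x)) => [/step [y Py Rxy]|nPx]; [exists y | exists x].
have [next nextP] := ClassicalEpsilon.choice _ step'.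
have PF i : P (iter i next x0) by elim: i => //= i IH; case: (nextP _ IH).
by exists (fun i => iter i next x0) => i; split => //; case: (nextP _ (PF i)).
Qed.

Section AssociatedPrimes.
Variables (K : fieldType) (n : nat).
Local Notation S := {mpoly K[n]}.
Implicit Types (a b f g h : S) (J I : S -> Prop).

(* If (J : f) is never prime for a form f outside J, then (by the graded
   primality test) a b f in J with a f, b f outside J for forms a, b; so
   (J : f) is strictly contained in (J : b f), with b f again a form
   outside J.  Starting from f = 1 this yields a strictly increasing chain
   of ideals, contradicting the ascending chain condition. *)
Lemma graded_ass_exists J : is_graded_ideal J -> ~ J 1 ->
  exists d f, f \is d.-homog /\ is_prime_ideal (colon J f).
Proof.
move=> gJ nJ1; have iJ := gJ.1; apply: NNPP => noprime.
pose P f := (exists d, f \is d.-homog) /\ ~ J f.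
pose R f g := (exists b, g = b * f) /\ ~ (forall h, colon J g h -> colon J f h).
have step f : P f -> exists2 g, P g & R f g.
  case=> [[d hf] nJf]; apply: NNPP => nstep; apply: noprime; exists d, f; split => //.
  split; [exact: colon_ideal | by rewrite /colon mul1r |].
  apply: graded_prime_of_forms; first exact: colon_graded hf.
  move=> a b da db ha hb; rewrite /colon => Jabf; apply: NNPP => nab; apply: nstep.
  exists (b * f); first by split; [exists (db + d)%N; apply: dhomogM | move=> Jbf; apply: nab; right].
  split; first by exists b.
  by move/(_ a); rewrite /colon mulrA => /(_ Jabf) Jaf; apply: nab; left.
have P1 : P 1 by split => //; exists 0%N; apply: dhomog1.
have [F FP] := chain_of_steps P1 step.
have chain i g : colon J (F i) g -> colon J (F i.+1) g.
  by case: (FP i) => _ [[b ->] _]; rewrite /colon mulrCA; apply: idealM.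
have [i stop] := ideal_acc (fun i => colon_ideal iJ (F i)) chain.
by case: (FP i) => _ [_]; apply.
Qed.

Lemma vnumber_spec J : is_graded_ideal J -> ~ J 1 ->
  exists f, f \is (vnumber J).-homog /\ is_prime_ideal (colon J f).
Proof.
move=> gJ nJ1; have [d [f [hf Pf]]] := graded_ass_exists gJ nJ1.
have [[fv [hv [Pv _]]] _] :=
  leastP (P := fun d => exists f, f \is d.-homog /\ Ass J (colon J f))
    (ex_intro _ f (conj hf (conj Pf (ex_intro _ f (fun g => iff_refl _))))).
by exists fv.
Qed.

Lemma alpha_spec I : is_graded_ideal I -> (exists f, I f /\ f != 0) ->
  (exists g, [/\ I g, g != 0 & g \is (alpha I).-homog]) /\
  forall h, I h -> lowdeg (alpha I) h.
Proof.
move=> gI [f [If f0]].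
have comp h m : I h -> m \in msupp h ->
    [/\ I (hcomp (mdeg m) h), hcomp (mdeg m) h != 0 & hcomp (mdeg m) h \is (mdeg m).-homog].
  by move=> Ih mh; split; [apply: gI.2 | apply: hcomp_supp_neq0 | apply: hcomp_homog].
have [alphaP alpha_min] :=
  leastP (P := fun d => exists f : S, [/\ I f, f != 0 & f \is d.-homog])
    (ex_intro _ _ (comp _ _ If (mlead_supp f0))).
split => // h Ih m mh; apply: alpha_min.
by exists (hcomp (mdeg m) h); apply: comp.
Qed.

End AssociatedPrimes.

Theorem lemma4p4 (K : fieldType) (n : nat) (I : {mpoly K[n]} -> Prop) :
  is_graded_ideal I ->
  (exists f, I f /\ f != 0) ->
  ~ I 1 ->
  exists c : int, exists k0 : nat, forall k : nat, (k0 <= k)%N ->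
    ((alpha I * k)%N%:Z + c <= (vnumber (ideal_pow I k))%:Z).
Proof.
move=> gI nzI nI1; have [[g [Ig g0 hg]] lowI] := alpha_spec gI nzI.
exists (- (alpha I)%:Z), 1%N => k k1.
have gJ := ideal_pow_graded gI k.
have nJ1 : ~ ideal_pow I k 1 by move/(ideal_pow_sub gI.1 k1).
have [f [hf Pf]] := vnumber_spec gJ nJ1.
have f0 : f != 0.
  by apply/eqP => f0; case: Pf => _ []; rewrite /colon f0 mulr0; apply: ideal0 gJ.1.
(* g^k lies in I^k, so g f lies in I^k by primality of (I^k : f). *)
have gfJ : colon (ideal_pow I k) f g.
  apply: (prime_exp (k := k.-1) Pf); rewrite prednK // /colon.
  by apply: (idealMr gJ.1); apply: ideal_pow_exp.
(* g f is a nonzero form of degree alpha + v(I^k) with monomials of degree >= k alpha. *)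
have gf0 : g * f != 0 by rewrite mulf_neq0.
have := ideal_pow_lowdeg lowI gfJ (mlead_supp gf0).
by rewrite (dhomogP _ _ _ (dhomogM hg hf) _ (mlead_supp gf0)); lia.
Qed.
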